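(* Let $A=\begin{pmatrix}A_I & A_{I\Gamma}\\ A_{\Gamma I} & A_\Gamma\end{pmatrix}$ be symmetric positive definite ($A_{I\Gamma}=A_{\Gamma I}^\top$, $A_\Gamma\in\mathbb{R}^{n_\Gamma\times n_\Gamma}$), $S_\Gamma=A_\Gamma-A_{\Gamma I}A_I^{-1}A_{I\Gamma}$, $S_I=A_I-A_{I\Gamma}A_\Gamma^{-1}A_{\Gamma I}$, $A_\Gamma=R_\Gamma^\top R_\Gamma$ the Cholesky factorization, and $K=R_\Gamma^{-\top}A_{\Gamma I}S_I^{-1}A_{I\Gamma}R_\Gamma^{-1}$. Let $U_k\in\mathbb{R}^{n_\Gamma\times k}$ have orthonormal columns that are eigenvectors of $K$ with $KU_k=U_k\Sigma_k$, $\Sigma_k$ diagonal, and set $\mathcal{P}_1=I+U_k\Sigma_kU_k^\top$ and $B=R_\Gamma^{-\top}S_\Gamma R_\Gamma^{-1}$. Then $$\mathcal{P}_1B=B-U_k(I+\Sigma_k)^{-1}U_k^\top+U_kU_k^\top,$$ so that $\mathcal{P}_1B$ acts as the identity on the column space of $U_k$ and coincides with $B$ on its orthogonal complement (which is $B$-invariant). Moreover $\mathcal{P}_1B$ is spectrally equivalent to $\mathcal{M}_1S_\Gamma$ where $\mathcal{M}_1=A_\Gamma^{-1}+\breve Z_k\Sigma_k\breve Z_k^\top$ with $\breve Z_k=R_\Gamma^{-1}U_k$.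
   Context: $S_\Gamma$ and $S_I$ are the Schur complements of $A$ with respect to $A_\Gamma$ and $A_I$; $K$ is symmetric positive semidefinite and $R_\Gamma S_\Gamma^{-1}R_\Gamma^\top=I+K$. ''Spectrally equivalent'' means having the same eigenvalues with multiplicities. *)

From HB Require Import structures.
From mathcomp Require Import all_boot all_order all_algebra.
Set Implicit Arguments. Unset Strict Implicit. Unset Printing Implicit Defensive.
Import Order.TTheory GRing.Theory Num.Theory.
Local Open Scope ring_scope.

Definition sym_pos_def (R : realFieldType) (n : nat) (M : 'M[R]_n) : Prop :=
  M^T = M /\ forall x : 'cV[R]_n, x != 0 -> 0 < (x^T *m M *m x) 0 0.

Definition chol_factor (R : realFieldType) (n : nat) (Rm : 'M[R]_n) : Prop :=
  (forall i j : 'I_n, (j < i)%N -> Rm i j = 0) /\ (forall i : 'I_n, 0 < Rm i i).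

(* "Spectrally equivalent": same eigenvalues with (algebraic) multiplicities,
   i.e. equal characteristic polynomials. *)
Definition spectrally_equivalent (R : realFieldType) (n : nat) (M N : 'M[R]_n) : Prop :=
  char_poly M = char_poly N.

From HB Require Import structures.
From mathcomp Require Import all_boot all_order all_algebra.
Import Order.TTheory GRing.Theory Num.Theory.
Set Implicit Arguments.
Unset Strict Implicit.
Unset Printing Implicit Defensive.
Local Open Scope ring_scope.

(* The proof rests on one identity: with K = R_G^-T A_GI S_I^-1 A_IG R_G^-1
   and B = R_G^-T S_G R_G^-1 one has  B (I + K) = I,  which follows from the
   "Schur push-through" relation  S_G A_G^-1 A_GI = A_GI A_I^-1 S_I  and the
   Cholesky identity  A_G^-1 = R_G^-1 R_G^-T.  Hence every eigenvector of K
   with eigenvalue s is an eigenvector of B with eigenvalue 1/(1+s), i.e.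
   B U = U (I + Sig)^-1, and by symmetry of B also U^T B = (I + Sig)^-1 U^T.  Finally
   M1 = R_G^-1 P1 R_G^-T, so M1 S_G = R_G^-1 (P1 B) R_G is similar to P1 B. *)

Lemma trivial_kernel_unitmx (R : fieldType) (n : nat) (M : 'M[R]_n) :
  (forall x : 'cV[R]_n, M *m x = 0 -> x = 0) -> M \in unitmx.
Proof.
move=> kerM; rewrite unitmxE unitfE -det_tr; apply/negP => /det0P [v vn0 vM0].
have /eqP : v^T = 0 by apply: kerM; rewrite -[M *m _]trmxK trmx_mul trmxK vM0 trmx0.
by rewrite trmx_eq0 (negbTE vn0).
Qed.

Lemma char_poly_conj (R : fieldType) (n : nat) (A P : 'M[R]_n) :
  P \in unitmx -> char_poly (invmx P *m A *m P) = char_poly A.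
Proof.
move=> uP; rewrite /char_poly.
have eX : ('X%:M : 'M_n) = map_mx polyC (invmx P) *m 'X%:M *m map_mx polyC P.
  by rewrite -mulmxA -scalar_mxC mulmxA -map_mxM mulVmx // map_mx1 mul1mx.
have -> : char_poly_mx (invmx P *m A *m P) =
    map_mx polyC (invmx P) *m char_poly_mx A *m map_mx polyC P.
  by rewrite /char_poly_mx !map_mxM mulmxBr mulmxBl -eX.
rewrite !det_mulmx mulrAC -det_mulmx -map_mxM mulVmx //.
by rewrite map_mx1 det1 mul1r.
Qed.

Lemma spd_isotropic_eq0 (R : realFieldType) (n : nat) (M : 'M[R]_n)
    (y : 'cV[R]_n) :
  sym_pos_def M -> y^T *m (M *m y) = 0 -> y = 0.
Proof.
move=> [_ posM] yMy0; apply/eqP/negPn/negP => /posM.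
by rewrite -mulmxA yMy0 mxE ltxx.
Qed.

Lemma spd_kernel_eq0 (R : realFieldType) (n : nat) (M : 'M[R]_n)
    (y : 'cV[R]_n) :
  sym_pos_def M -> M *m y = 0 -> y = 0.
Proof. by move=> spdM My0; apply: (spd_isotropic_eq0 spdM); rewrite My0 mulmx0. Qed.

Section SPDBlocks.
Variables (R : realFieldType) (nI nG : nat).
Variables (AI : 'M[R]_nI) (AIG : 'M[R]_(nI, nG)) (AGI : 'M[R]_(nG, nI))
          (AG : 'M[R]_nG).
Hypothesis spdA : sym_pos_def (block_mx AI AIG AGI AG).

Lemma spd_block_unit_tl : AI \in unitmx.
Proof.
apply: trivial_kernel_unitmx => x AIx0.
suff /eqP : col_mx x (0 : 'cV_nG) = 0 by rewrite col_mx_eq0 => /andP[/eqP].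
apply: (spd_isotropic_eq0 spdA).
by rewrite mul_block_col AIx0 !mulmx0 !addr0 tr_col_mx mul_row_col mulmx0 trmx0 mul0mx addr0.
Qed.

Lemma spd_block_unit_br : AG \in unitmx.
Proof.
apply: trivial_kernel_unitmx => x AGx0.
suff /eqP : col_mx (0 : 'cV_nI) x = 0 by rewrite col_mx_eq0 => /andP[_ /eqP].
apply: (spd_isotropic_eq0 spdA).
by rewrite mul_block_col AGx0 !mulmx0 !add0r tr_col_mx mul_row_col mulmx0 trmx0 mul0mx addr0.
Qed.

(* The Schur complement S_I = A_I - A_IG A_G^-1 A_GI is invertible: if
   S_I x = 0 then the block matrix kills (x, -A_G^-1 A_GI x). *)
Lemma spd_schur_unit : AI - AIG *m invmx AG *m AGI \in unitmx.
Proof.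
apply: trivial_kernel_unitmx => x SIx0; set y := - (invmx AG *m AGI *m x).
suff /eqP : col_mx x y = 0 by rewrite col_mx_eq0 => /andP[/eqP].
apply: (spd_kernel_eq0 spdA).
rewrite mul_block_col /y !mulmxN !mulmxA (mulmxV spd_block_unit_br) mul1mx subrr.
have -> : AI *m x - AIG *m invmx AG *m AGI *m x = (AI - AIG *m invmx AG *m AGI) *m x.
  by rewrite mulmxBl.
by rewrite SIx0 col_mx0.
Qed.

End SPDBlocks.

Lemma block_sym_eq (R : pzRingType) (nI nG : nat) (AI : 'M[R]_nI)
    (AIG : 'M[R]_(nI, nG)) (AGI : 'M[R]_(nG, nI)) (AG : 'M[R]_nG) :
  (block_mx AI AIG AGI AG)^T = block_mx AI AIG AGI AG ->
  [/\ AI^T = AI, AGI^T = AIG, AIG^T = AGI & AG^T = AG].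
Proof. by rewrite tr_block_mx => /eq_block_mx. Qed.

Section SchurIdentities.
Variables (R : fieldType) (nI nG : nat).
Variables (AI : 'M[R]_nI) (AIG : 'M[R]_(nI, nG)) (AGI : 'M[R]_(nG, nI))
          (AG : 'M[R]_nG).
Hypotheses (uAI : AI \in unitmx) (uAG : AG \in unitmx).

Let SG := AG - AGI *m invmx AI *m AIG.
Let SI := AI - AIG *m invmx AG *m AGI.

Lemma schur_push_through : SG *m invmx AG *m AGI = AGI *m invmx AI *m SI.
Proof. by rewrite /SG /SI !mulmxBl !mulmxBr !mulmxA mulmxV // mul1mx mulmxKV. Qed.

Lemma schur_sym : AI^T = AI -> AIG^T = AGI -> AG^T = AG -> SG^T = SG.
Proof.
move=> sAI sAIG sAG; rewrite /SG linearB /= !trmx_mul trmx_inv sAI sAG.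
by rewrite -sAIG trmxK !mulmxA.
Qed.

Variable (RG : 'M[R]_nG).
Hypothesis cholA : AG = RG^T *m RG.

Lemma cholesky_unit : RG \in unitmx.
Proof. by move: uAG; rewrite cholA unitmx_mul => /andP[]. Qed.

Lemma cholesky_inv : invmx AG = invmx RG *m invmx RG^T.
Proof.
have uRG := cholesky_unit; have uRGt : RG^T \in unitmx by rewrite unitmx_tr.
have AGinv : AG *m (invmx RG *m invmx RG^T) = 1%:M.
  by rewrite cholA mulmxA mulmxK // mulmxV.
by rewrite -(mulKmx uAG (invmx RG *m _)) AGinv mulmx1.
Qed.

(* The key identity B (I + K) = I, where B and K are the two halves of the
   splitting A_G = S_G + A_GI A_I^-1 A_IG, congruence-transformed by R_G. *)
Lemma deflation_inverse_identity : SI \in unitmx ->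
  let K := invmx RG^T *m AGI *m invmx SI *m AIG *m invmx RG in
  let B := invmx RG^T *m SG *m invmx RG in
  B *m (1%:M + K) = 1%:M.
Proof.
move=> uSI K B; have uRG := cholesky_unit.
have uRGt : RG^T \in unitmx by rewrite unitmx_tr.
have push := congr1 (mulmx (invmx RG^T)) schur_push_through.
rewrite !mulmxA in push.
rewrite mulmxDr mulmx1 /B /K !mulmxA -(mulmxA _ (invmx RG)) -cholesky_inv push.
rewrite mulmxK // -mulmxDl -!(mulmxA (invmx RG^T)) -mulmxDr.
have -> : SG + AGI *m invmx AI *m AIG = AG by rewrite /SG subrK.
by rewrite cholA mulmxA mulVmx // mul1mx mulmxV.
Qed.

End SchurIdentities.

Section Deflation.
Variables (R : fieldType) (n k : nat) (B K : 'M[R]_n) (U : 'M[R]_(n, k))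
          (d : 'rV[R]_k).
Hypotheses (symB : B^T = B) (invB : B *m (1%:M + K) = 1%:M).
Hypotheses (orthU : U^T *m U = 1%:M) (eigU : K *m U = U *m diag_mx d).

Let Sig := diag_mx d.
Let D := invmx (1%:M + Sig).

(* No eigenvalue of K equals -1, since I + K has the left inverse B. *)
Lemma shifted_eigenvalues_unit : 1%:M + Sig \in unitmx.
Proof.
apply: trivial_kernel_unitmx => v v0.
have UvK : (1%:M + K) *m (U *m v) = 0.
  by rewrite mulmxA mulmxDl mul1mx eigU -{1}[U]mulmx1 -mulmxDr -mulmxA v0 mulmx0.
have Uv0 : U *m v = 0.
  by have := congr1 (mulmx B) UvK; rewrite mulmxA invB mul1mx mulmx0.
by rewrite -[v]mul1mx -orthU -mulmxA Uv0 mulmx0.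
Qed.

Lemma deflation_right : B *m U = U *m D.
Proof.
apply: (canRL (mulmxK shifted_eigenvalues_unit)).
rewrite -mulmxA mulmxDr mulmx1 -eigU -{1}[U]mul1mx -mulmxDl mulmxA invB.
exact: mul1mx.
Qed.

Lemma deflation_left : U^T *m B = D *m U^T.
Proof.
have symD : D^T = D by rewrite /D trmx_inv linearD /= trmx1 tr_diag_mx.
by rewrite -[U^T *m B]trmxK trmx_mul trmxK symB deflation_right trmx_mul symD.
Qed.

Let P1 := 1%:M + U *m Sig *m U^T.

(* Explicit form of the deflated operator, using Sig (I + Sig)^-1 = I - D. *)
Lemma deflated_operator : P1 *m B = B - U *m D *m U^T + U *m U^T.
Proof.
have SigD : Sig *m D = 1%:M - D.
  by rewrite -(mulmxV shifted_eigenvalues_unit) mulmxDl mul1mx addrC addKr.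
rewrite /P1 mulmxDl mul1mx -mulmxA deflation_left mulmxA -(mulmxA U) SigD.
by rewrite mulmxBr mulmx1 mulmxBl addrA addrAC.
Qed.

Lemma deflated_identity_on_span : (P1 *m B) *m U = U.
Proof.
rewrite -mulmxA deflation_right mulmxA /P1 mulmxDl mul1mx -mulmxA orthU mulmx1.
by rewrite -{1}[U]mulmx1 -mulmxDr mulmxK // shifted_eigenvalues_unit.
Qed.

Lemma deflated_on_complement (x : 'cV[R]_n) :
  U^T *m x = 0 -> (P1 *m B) *m x = B *m x /\ U^T *m (B *m x) = 0.
Proof.
move=> Ux0; have UBx0 : U^T *m (B *m x) = 0.
  by rewrite mulmxA deflation_left -mulmxA Ux0 mulmx0.
by split=> //; rewrite -mulmxA /P1 mulmxDl mul1mx -mulmxA UBx0 mulmx0 addr0.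
Qed.

End Deflation.

Lemma preconditioner_similarity (R : fieldType) (n k : nat)
    (AG RG SG : 'M[R]_n) (U : 'M[R]_(n, k)) (Sig : 'M[R]_k) :
  RG \in unitmx -> invmx AG = invmx RG *m invmx RG^T ->
  let P1 := 1%:M + U *m Sig *m U^T in
  let B := invmx RG^T *m SG *m invmx RG in
  let Zk := invmx RG *m U in
  (invmx AG + Zk *m Sig *m Zk^T) *m SG = invmx RG *m (P1 *m B) *m RG.
Proof.
move=> uRG invAG P1 B Zk.
have M1E : invmx AG + Zk *m Sig *m Zk^T = invmx RG *m P1 *m invmx RG^T.
  by rewrite /Zk invAG trmx_mul trmx_inv /P1 mulmxDr mulmx1 mulmxDl !mulmxA.
by rewrite M1E /B !mulmxA mulmxKV.
Qed.

Theorem mainTheorem4 (R : realFieldType) (nI nG k : nat)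
    (AI : 'M[R]_nI) (AIG : 'M[R]_(nI, nG)) (AGI : 'M[R]_(nG, nI)) (AG : 'M[R]_nG)
    (RG : 'M[R]_nG) (U : 'M[R]_(nG, k)) (d : 'rV[R]_k) :
  sym_pos_def (block_mx AI AIG AGI AG) ->
  AIG = AGI^T ->
  chol_factor RG -> AG = RG^T *m RG ->
  let SG := AG - AGI *m invmx AI *m AIG in
  let SI := AI - AIG *m invmx AG *m AGI in
  let K := invmx RG^T *m AGI *m invmx SI *m AIG *m invmx RG in
  let Sig := diag_mx d in
  U^T *m U = 1%:M ->
  K *m U = U *m Sig ->
  let P1 := 1%:M + U *m Sig *m U^T in
  let B := invmx RG^T *m SG *m invmx RG in
  let Zk := invmx RG *m U in
  let M1 := invmx AG + Zk *m Sig *m Zk^T in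
  [/\ P1 *m B = B - U *m invmx (1%:M + Sig) *m U^T + U *m U^T,
      (P1 *m B) *m U = U,
      (forall x : 'cV[R]_nG, U^T *m x = 0 ->
         (P1 *m B) *m x = B *m x /\ U^T *m (B *m x) = 0)
    & spectrally_equivalent (P1 *m B) (M1 *m SG)].
Proof.
move=> spdA _ _ cholA SG SI K Sig orthU eigU P1 B Zk M1.
have uAI := spd_block_unit_tl spdA; have uAG := spd_block_unit_br spdA.
have uRG := cholesky_unit uAG cholA.
have [sAI _ sAIG sAG] := block_sym_eq (proj1 spdA).
have symB : B^T = B.
  by rewrite /B !trmx_mul !trmx_inv trmxK (schur_sym sAI sAIG sAG) !mulmxA.
have invB : B *m (1%:M + K) = 1%:M.
  exact: (deflation_inverse_identity uAI uAG cholA (spd_schur_unit spdA)).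
split.
- exact: deflated_operator symB invB orthU eigU.
- exact: deflated_identity_on_span invB orthU eigU.
- exact: deflated_on_complement symB invB orthU eigU.
have similar := @preconditioner_similarity R nG k AG RG SG U Sig uRG
  (cholesky_inv uAG cholA).
by rewrite /spectrally_equivalent /M1 /Zk similar char_poly_conj.
Qed.
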